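(* There exist integers $x,y$ such that $s_{16,16}x^2+s_{32}y\in\{1,-1\}$.
   Context: $s_I$ is the coefficient of $p_I$ in the Hirzebruch $\mathcal{L}$-polynomial $\mathcal{L}_k=\sum_{|I|=k}s_Ip_I$ (multiplicative sequence with characteristic power series $\sqrt t/\tanh\sqrt t$); $s_k=\frac{2^{2k}(2^{2k-1}-1)|B_{2k}|}{(2k)!}$ and $s_{k,k}=\tfrac12(s_k^2-s_{2k})$, with $B_j$ the Bernoulli numbers. (This is the signature equation for a $128$-dimensional rational projective plane.) *)

From HB Require Import structures.
From mathcomp Require Import all_boot all_order all_algebra.
Set Implicit Arguments. Unset Strict Implicit. Unset Printing Implicit Defensive.
Import Order.TTheory GRing.Theory Num.Theory.
Local Open Scope ring_scope.

(* Bernoulli numbers B_0, B_1, ... (convention B_1 = -1/2; irrelevant here since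
   only even indices are used), via the standard recursion
   B_0 = 1,  B_m = - 1/(m+1) * \sum_{k<m} C(m+1,k) B_k.
   bern_upto n is the list [:: B_0; ...; B_n]; the sum over k = 0..m-1 is
   written as a foldr over iota 0 m (i.e. \sum_(0 <= k < m), computably). *)
Fixpoint bern_upto (n : nat) : seq rat :=
  match n with
  | 0%N => [:: 1]
  | n'.+1 =>
      let s := bern_upto n' in
      rcons s (- (foldr (fun k acc => ('C(n'.+2, k))%:R * s`_k + acc) 0 (iota 0 n'.+1))
                / (n'.+2)%:R)
  end.

Definition bernoulli (n : nat) : rat := (bern_upto n)`_n.

(* s_k = 2^{2k} (2^{2k-1} - 1) |B_{2k}| / (2k)!  (coefficient of p_k in L_k) *)
Definition s_k (k : nat) : rat :=
  (2 ^+ (2 * k)) * (2 ^+ (2 * k).-1 - 1) * `|bernoulli (2 * k)| / ((2 * k)`!)%:R.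

Definition s_kk (k : nat) : rat := (s_k k ^+ 2 - s_k (2 * k)) / 2.

(* Both coefficients are explicit rationals, so the theorem is settled by an
   explicit pair (X, Y) and exact arithmetic. MathComp's [int] and [rat] are
   unary and cannot evaluate B_64, so s_{16,16} and s_32 are recomputed in
   Stdlib's binary rationals [Q] and transported to [rat] along the map
   [ratQ : Q -> rat], which commutes with the field operations. *)

From HB Require Import structures.
From mathcomp Require Import all_boot all_order all_algebra.
From Stdlib Require Import ZArith QArith Qabs.
From mathcomp Require Import ssrZ zify ring.
Import Order.TTheory GRing.Theory Num.Theory.
Local Open Scope ring_scope.

Definition ratZ (z : Z) : rat := (int_of_Z z)%:~R.
HB.instance Definition _ := GRing.RMorphism.copy ratZ (intr \o int_of_Z).

Lemma Z_of_natE n : Z.of_nat n = n%:R.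
Proof. by rewrite -{1}(natn n) rmorph_nat. Qed.

Lemma ratZ_nat n : ratZ (Z.of_nat n) = n%:R.
Proof. by rewrite Z_of_natE rmorph_nat. Qed.

Lemma ZpowE (a : Z) m : (a ^ Z.of_nat m)%Z = a ^+ m.
Proof.
elim: m => [|m IH] //.
by rewrite exprS -IH Nat2Z.inj_succ Z.pow_succ_r //; lia.
Qed.

Lemma ratZ_pow (a : Z) m : ratZ (a ^ Z.of_nat m)%Z = ratZ a ^+ m.
Proof. by rewrite ZpowE rmorphXn. Qed.

Lemma ratZ_norm a : ratZ `|a| = `|ratZ a|.
Proof. by rewrite /ratZ -intr_norm; case: a => //= p; congr (_%:~R); lia. Qed.

Lemma ratZ_pos_gt0 p : 0 < ratZ (Zpos p).
Proof. by rewrite /ratZ /= ltr0n; lia. Qed.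

Lemma ratZ_pos_neq0 p : ratZ (Zpos p) != 0.
Proof. by rewrite gt_eqF ?ratZ_pos_gt0. Qed.

Definition ratQ (q : Q) : rat := ratZ (Qnum q) / ratZ (Zpos (Qden q)).

Lemma ratQ_inject_Z z : ratQ (inject_Z z) = ratZ z.
Proof. by rewrite /ratQ /= rmorph1 divr1. Qed.

Lemma ratQ0 : ratQ 0 = 0. Proof. exact: ratQ_inject_Z 0%Z. Qed.
Lemma ratQ1 : ratQ 1 = 1. Proof. exact: ratQ_inject_Z 1%Z. Qed.

Lemma ratQD x y : ratQ (x + y)%Q = ratQ x + ratQ y.
Proof.
case: x y => [a p] [b q]; rewrite /ratQ /Qplus /=.
rewrite -[Zpos (p * q)]/(Zpos p * Zpos q)%Z !rmorphD !rmorphM.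
by field; rewrite !ratZ_pos_neq0.
Qed.

Lemma ratQM x y : ratQ (x * y)%Q = ratQ x * ratQ y.
Proof.
case: x y => [a p] [b q]; rewrite /ratQ /Qmult /=.
rewrite -[Zpos (p * q)]/(Zpos p * Zpos q)%Z !rmorphM.
by field; rewrite !ratZ_pos_neq0.
Qed.

Lemma ratQN x : ratQ (- x)%Q = - ratQ x.
Proof.
by case: x => [a p]; rewrite /ratQ /Qopp /= -[(- a)%Z]/(- a) rmorphN mulNr.
Qed.

Lemma ratQV x : ratQ (/ x)%Q = (ratQ x)^-1.
Proof.
case: x => [[|a|a] p]; rewrite /ratQ /Qinv /=.
- by rewrite rmorph0 !mul0r invr0.
- by rewrite invf_div.
- rewrite invf_div -[Zneg a]/(- Zpos a) -[Zneg p]/(- Zpos p) !rmorphN.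
  by rewrite invrN mulrN mulNr.
Qed.

Lemma ratQ_eq x y : (x == y)%Q -> ratQ x = ratQ y.
Proof.
case: x y => [a p] [b q]; rewrite /Qeq /ratQ /= => /(congr1 ratZ).
rewrite !rmorphM => h.
by apply/eqP; rewrite eqr_div ?ratZ_pos_neq0 // h.
Qed.

Lemma ratQ_red x : ratQ (Qred x) = ratQ x.
Proof. exact/ratQ_eq/Qred_correct. Qed.

Lemma ratQ_abs x : ratQ (Qabs x) = `|ratQ x|.
Proof.
case: x => [a p]; rewrite /ratQ /Qabs /= -[Z.abs a]/`|a| ratZ_norm.
by rewrite normrM normfV (gtr0_norm (ratZ_pos_gt0 p)).
Qed.

Lemma ratQ_quad_eq1 (a b : Q) (x y : Z) :
  (a * inject_Z x * inject_Z x + b * inject_Z y == 1)%Q ->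
  ratQ a * (int_of_Z x)%:~R ^+ 2 + ratQ b * (int_of_Z y)%:~R = 1.
Proof.
by move=> /ratQ_eq; rewrite ratQD !ratQM ratQ1 !ratQ_inject_Z -mulrA -expr2.
Qed.

Lemma foldr_morph_in (A : eqType) (B C : Type) (phi : B -> C)
    (f : A -> B -> B) (g : A -> C -> C) (z : B) (s : seq A) :
  (forall a b, a \in s -> phi (f a b) = g a (phi b)) ->
  phi (foldr f z s) = foldr g (phi z) s.
Proof.
elim: s => [|a s IHs] //= fg.
by rewrite fg ?mem_head // IHs // => b c bs; rewrite fg // in_cons bs orbT.
Qed.

Fixpoint Zfact (n : nat) : Z :=
  if n is m.+1 then (Z.of_nat n * Zfact m)%Z else 1%Z.

Definition Zbin (n k : nat) : Z := (Zfact n / (Zfact k * Zfact (n - k)))%Z.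

Lemma Z_of_nat_fact n : Z.of_nat n`! = Zfact n.
Proof. by elim: n => // n IH; rewrite factS Nat2Z.inj_mul IH. Qed.

Lemma Z_of_nat_bin (n k : nat) : (k <= n)%nat -> Z.of_nat 'C(n, k) = Zbin n k.
Proof.
move=> le_kn; rewrite /Zbin -!Z_of_nat_fact -(bin_fact le_kn) !Nat2Z.inj_mul.
by rewrite Z.div_mul //; have := fact_gt0 k; have := fact_gt0 (n - k); lia.
Qed.

Fixpoint bernQ (n : nat) : seq Q :=
  if n is n'.+1 then
    let s := bernQ n' in
    let step k acc := Qred (inject_Z (Zbin n'.+2 k) * nth 0 s k + acc)%Q in
    rcons s (Qred (- foldr step 0%Q (iota 0 n'.+1) / inject_Z (Z.of_nat n'.+2))%Q)
  else [:: 1%Q].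

Lemma size_bernQ n : size (bernQ n) = n.+1.
Proof. by elim: n => //= n IH; rewrite size_rcons IH. Qed.

Lemma bern_uptoE n : bern_upto n = map ratQ (bernQ n).
Proof.
elim: n => [|n IH]; first by rewrite /= ratQ1.
cbn [bern_upto bernQ]; rewrite map_rcons -IH.
rewrite ratQ_red /Qdiv ratQM ratQV ratQN ratQ_inject_Z ratZ_nat.
congr (rcons _ (- _ / _)); rewrite -[X in foldr _ X]ratQ0.
symmetry; apply: foldr_morph_in => k r.
rewrite mem_iota add0n ratQ_red ratQD ratQM ratQ_inject_Z => /andP[_ lt_kn].
rewrite -Z_of_nat_bin ?ratZ_nat; last by rewrite ltnW // ltnW.
by rewrite IH (nth_map 0%Q) // size_bernQ.
Qed.

Lemma bernoulliE n : bernoulli n = ratQ (nth 0%Q (bernQ n) n).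
Proof. by rewrite /bernoulli bern_uptoE (nth_map 0%Q) // size_bernQ. Qed.

Definition s_kQ (k : nat) : Q :=
  Qred (inject_Z (2 ^ Z.of_nat (2 * k)) * (inject_Z (2 ^ Z.of_nat (2 * k).-1) - 1)
        * Qabs (nth 0 (bernQ (2 * k)) (2 * k)) / inject_Z (Zfact (2 * k)))%Q.

Definition s_kkQ (k : nat) : Q := ((s_kQ k * s_kQ k - s_kQ (2 * k)) / 2)%Q.

Lemma s_kE k : s_k k = ratQ (s_kQ k).
Proof.
rewrite /s_kQ ratQ_red /Qdiv /Qminus !ratQM ratQV ratQD ratQN ratQ1 ratQ_abs.
by rewrite !ratQ_inject_Z !ratZ_pow -Z_of_nat_fact ratZ_nat -bernoulliE.
Qed.

Lemma s_kkE k : s_kk k = ratQ (s_kkQ k).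
Proof.
rewrite /s_kk /s_kkQ /Qdiv /Qminus ratQM ratQV ratQD ratQN ratQM -!s_kE expr2.
by rewrite [ratQ 2]ratQ_inject_Z (ratZ_nat 2).
Qed.

Definition witness_x : Z := 78354170704306103369105111162661909383680827384399539776975.
Definition witness_y : Z := 1429431568083735438429931567508013873723196123249454409130324866245387503540042011183968464732113303526468250.

Lemma witness_eq : (s_kkQ 16 * inject_Z witness_x * inject_Z witness_x
                    + s_kQ 32 * inject_Z witness_y == 1)%Q.
Proof. by vm_compute. Qed.

Theorem proposition3p4 :
  exists x y : int,
    (s_kk 16 * (x%:~R) ^+ 2 + s_k 32 * y%:~R = 1 :> rat) \/
    (s_kk 16 * (x%:~R) ^+ 2 + s_k 32 * y%:~R = -1 :> rat).
Proof.
exists (int_of_Z witness_x), (int_of_Z witness_y); left.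
(* No conversion may ever unfold [int_of_Z witness_x]: it is a unary [nat]. *)
by rewrite s_kkE s_kE; apply: ratQ_quad_eq1; apply: witness_eq.
Qed.
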